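(* Take $\Omega=(0,\infty)$. The set $S=(0,\tfrac14]\cup\{\tfrac13,1\}$ is a fundamental set for the gamma function, i.e. $\mathrm{Cl}_\Omega(S)=(0,\infty)$.
   Context: Let $\Omega$ be either $(0,\infty)$ or $D=\mathbb{C}\setminus\{0,-1,-2,\dots\}$. An admissible instance (relative to $\Omega$) is one of the following finite lists of points, all entries of which are required to lie in $\Omega$: (i) $(z+1,\,z)$ for $z\in\Omega$ with $z+1\in\Omega$ (corresponding to the identity $\Gamma(z+1)=z\Gamma(z)$); (ii) $(z,\,1-z)$ for $z\in\Omega\setminus\mathbb{Z}$ with $1-z\in\Omega$ (corresponding to $\Gamma(z)\Gamma(1-z)=\pi/\sin(\pi z)$); (iii) for an integer $n\ge 2$, $\big(z,\,\tfrac{z}{n},\,\tfrac{z+1}{n},\dots,\tfrac{z+n-1}{n}\big)$ (corresponding to Gauss's multiplication formula $(2\pi)^{(n-1)/2}n^{1/2-z}\Gamma(z)=\prod_{j=0}^{n-1}\Gamma(\tfrac{z+j}{n})$). For $B\subseteq\Omega$, a point $p\in\Omega$ is obtained from $B$ in one step if there is an admissible instance in which $p$ occurs exactly once as an entry and every other entry lies in $B$. Set $B_0=B$, $B_{i+1}=B_i\cup\{p: p \text{ obtained from } B_i \text{ in one step}\}$, and $\mathrm{Cl}_\Omega(B)=\bigcup_{i\ge0}B_i$ (the set of points at which the value of $\Gamma$ is determined by its values on $B$ via finitely many applications of the identities). For $A,B\subseteq\Omega$ write $A\preceq B$ if $A\subseteq \mathrm{Cl}_\Omega(B)$. A set $S\subseteq\Omega$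 is a fundamental set (for $\Gamma$ on $\Omega$) if $\mathrm{Cl}_\Omega(S)=\Omega$. *)

From Stdlib Require Import Reals List.
Import ListNotations.
Open Scope R_scope.

Definition admissible (Omega : R -> Prop) (l : list R) : Prop :=
  (* (i)  Gamma(z+1) = z Gamma(z) *)
  (exists z : R, Omega z /\ Omega (z + 1) /\ l = [z + 1; z])
  \/
  (* (ii) reflection formula, z not an integer *)
  (exists z : R, Omega z /\ (forall k : Z, z <> IZR k) /\ Omega (1 - z)
                 /\ l = [z; 1 - z])
  \/
  (* (iii) Gauss multiplication formula, n >= 2 *)
  (exists (z : R) (n : nat), (2 <= n)%nat /\
       l = z :: map (fun j : nat => (z + INR j) / INR n) (seq 0 n) /\
       Forall Omega l).

Definition one_step (Omega : R -> Prop) (B : R -> Prop) (p : R) : Prop :=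
  Omega p /\
  exists l : list R, admissible Omega l /\
    exists l1 l2 : list R, l = l1 ++ p :: l2 /\ ~ In p l1 /\ ~ In p l2 /\
                           Forall B (l1 ++ l2).

Fixpoint Bstep (Omega : R -> Prop) (B : R -> Prop) (i : nat) : R -> Prop :=
  match i with
  | O => B
  | S i' => fun p => Bstep Omega B i' p \/ one_step Omega (Bstep Omega B i') p
  end.

Definition Cl (Omega : R -> Prop) (B : R -> Prop) (p : R) : Prop :=
  exists i : nat, Bstep Omega B i p.

Definition fundamental_set (Omega : R -> Prop) (S : R -> Prop) : Prop :=
  forall p : R, Cl Omega S p <-> Omega p.

Definition Omega_pos : R -> Prop := fun x => 0 < x.

Definition S5 : R -> Prop := fun x => (0 < x /\ x <= 1/4) \/ x = 1/3 \/ x = 1.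

(* The closure is sound (it never leaves Ω), so only completeness matters.
   For Ω = (0,∞) and B = S: reflection gives [3/4,1); for y ∈ (1/4,1/2),
   reflection and duplication give y from T y = 1 - 2y ∈ (0,1/2).  Since
   |T y - 1/3| = 2|y - 1/3|, iterating T from any y ≠ 1/3 reaches (0,1/4]
   after finitely many steps, so (0,1/2) ⊆ Cl.  Reflection, together with
   1/2 (duplication at z = 1), completes (0,1], and the functional equation
   then covers (0,∞). *)

From Stdlib Require Import Reals List Lra Lia.
Import ListNotations.
Open Scope R_scope.

Section Closure.

Variables (Omega B : R -> Prop).

Lemma Bstep_mono : forall i j p,
  (i <= j)%nat -> Bstep Omega B i p -> Bstep Omega B j p.
Proof.
  intros i j p Hij Hp. induction Hij as [|j Hij IH]; simpl; auto.
Qed.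

Lemma Forall_Cl_stage : forall l,
  Forall (Cl Omega B) l -> exists i, Forall (Bstep Omega B i) l.
Proof.
  intros l Hl. induction Hl as [|x l [i Hi] _ [j Hj]].
  - exists 0%nat. constructor.
  - exists (Nat.max i j). constructor.
    + apply (Bstep_mono i); [lia | exact Hi].
    + eapply Forall_impl; [|exact Hj].
      intros y Hy. apply (Bstep_mono j); [lia | exact Hy].
Qed.

Lemma Cl_step : forall l l1 p l2,
  Omega p -> admissible Omega l -> l = l1 ++ p :: l2 ->
  ~ In p l1 -> ~ In p l2 -> Forall (Cl Omega B) (l1 ++ l2) ->
  Cl Omega B p.
Proof.
  intros l l1 p l2 Hp Hadm Hl H1 H2 HF.
  destruct (Forall_Cl_stage _ HF) as [i Hi].
  exists (S i). right. split; [exact Hp|].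
  exists l. split; [exact Hadm|]. exists l1, l2. auto.
Qed.

Lemma Cl_sound : (forall x, B x -> Omega x) -> forall p, Cl Omega B p -> Omega p.
Proof.
  intros HB p [i Hi]. revert p Hi.
  induction i as [|i IH]; intros p Hi; simpl in Hi.
  - exact (HB p Hi).
  - destruct Hi as [Hi | [Hp _]]; auto.
Qed.

Lemma Cl_shift : forall z,
  Omega z -> Omega (z + 1) -> Cl Omega B z -> Cl Omega B (z + 1).
Proof.
  intros z Hz Hz1 Hc.
  apply (Cl_step [z + 1; z] [] (z + 1) [z]); simpl; auto.
  - left. exists z. auto.
  - intros [E | []]. lra.
Qed.

Lemma Cl_reflect : forall z, 0 < z < 1 -> z <> 1/2 ->
  Omega z -> Omega (1 - z) -> Cl Omega B z -> Cl Omega B (1 - z).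
Proof.
  intros z Hz Hhalf HO HO1 Hc.
  apply (Cl_step [z; 1 - z] [z] (1 - z) []); simpl; auto.
  - right; left. exists z. repeat split; auto.
    intros k ->. destruct Hz as [H0 H1].
    apply lt_IZR in H0. apply lt_IZR in H1. lia.
  - intros [E | []]. lra.
Qed.

Lemma duplication_admissible : forall z,
  Omega z -> Omega (z / 2) -> Omega ((z + 1) / 2) ->
  admissible Omega [z; z / 2; (z + 1) / 2].
Proof.
  intros z H0 H1 H2. right; right. exists z, 2%nat. split; [lia|split].
  - simpl. repeat f_equal; field.
  - repeat constructor; auto.
Qed.

Lemma Cl_halve : forall z, z <> 0 ->
  Omega z -> Omega (z / 2) -> Omega ((z + 1) / 2) ->
  Cl Omega B z -> Cl Omega B ((z + 1) / 2) -> Cl Omega B (z / 2).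
Proof.
  intros z Hz H0 H1 H2 Cz Cz1.
  apply (Cl_step _ [z] (z / 2) [(z + 1) / 2] H1
           (duplication_admissible z H0 H1 H2)); simpl; auto.
  - intros [E | []]. lra.
  - intros [E | []]. lra.
Qed.

End Closure.

Notation C := (Cl Omega_pos S5).

Lemma C_base : forall y, 0 < y <= 1/4 -> C y.
Proof. intros y Hy. exists 0%nat. simpl. unfold S5. lra. Qed.

Lemma C_third : C (1/3).
Proof. exists 0%nat. simpl. unfold S5. lra. Qed.

Lemma C_one : C 1.
Proof. exists 0%nat. simpl. unfold S5. lra. Qed.

(* 1/2 comes from the duplication instance (1, 1/2, 1), i.e. z = 1. *)
Lemma C_half : C (1/2).
Proof.
  assert (Hdup : admissible Omega_pos [1; 1/2; 1]).
  { replace [1; 1/2; 1] with [1; 1/2; (1 + 1)/2] by (repeat f_equal; field).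
    apply duplication_admissible; unfold Omega_pos; lra. }
  apply (Cl_step _ _ [1; 1/2; 1] [1] (1/2) [1]); simpl; auto.
  - unfold Omega_pos; lra.
  - intros [E | []]; lra.
  - intros [E | []]; lra.
  - repeat constructor; apply C_one.
Qed.

(* Reflection of (0,1/4] gives [3/4,1). *)
Lemma C_upper_quarter : forall y, 3/4 <= y < 1 -> C y.
Proof.
  intros y Hy. replace y with (1 - (1 - y)) by ring.
  apply Cl_reflect; unfold Omega_pos; try lra. apply C_base; lra.
Qed.

(* For y ∈ (1/4,1/2): reflection yields 2y from 1-2y, and duplication at
   z = 2y (with (2y+1)/2 ∈ [3/4,1)) yields y. *)
Lemma C_from_doubling : forall y, 1/4 < y < 1/2 -> C (1 - 2 * y) -> C y.
Proof.
  intros y Hy Hc.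
  assert (C2y : C (2 * y)).
  { replace (2 * y) with (1 - (1 - 2 * y)) by ring.
    apply Cl_reflect; unfold Omega_pos; auto; lra. }
  replace y with (2 * y / 2) by field.
  apply Cl_halve; unfold Omega_pos; auto; try lra.
  apply C_upper_quarter; lra.
Qed.

(* Iterating y ↦ 1 - 2y doubles the distance to 1/3, so n+1 steps suffice
   once (n+1)·|y - 1/3| ≥ 1/12. *)
Lemma C_lower_iter : forall n y, 0 < y < 1/2 ->
  Rabs (y - 1/3) * INR (S n) >= 1/12 -> C y.
Proof.
  induction n as [|n IH]; intros y Hy Hd;
    (destruct (Rle_lt_dec y (1/4)); [apply C_base; lra|]);
    apply C_from_doubling; try lra.
  - simpl in Hd. apply C_base.
    unfold Rabs in Hd; destruct (Rcase_abs (y - 1/3)); lra.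
  - apply IH; [lra|].
    replace (1 - 2 * y - 1/3) with (-2 * (y - 1/3)) by lra.
    rewrite Rabs_mult, Rabs_left by lra.
    rewrite (S_INR (S n)) in Hd.
    assert (1 <= INR (S n)) by (apply (le_INR 1); lia).
    pose proof (Rabs_pos (y - 1/3)). nra.
Qed.

(* (0,1/2) ⊆ Cl: choose n with (n+1)·|y - 1/3| ≥ 1/12 unless y = 1/3. *)
Lemma C_lower_half : forall y, 0 < y < 1/2 -> C y.
Proof.
  intros y Hy.
  destruct (Req_dec y (1/3)) as [-> | Hne]; [exact C_third|].
  assert (Hd : 0 < Rabs (y - 1/3)) by (apply Rabs_pos_lt; lra).
  destruct (INR_unbounded (/ (12 * Rabs (y - 1/3)))) as [n Hn].
  apply (C_lower_iter n); [exact Hy|].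
  rewrite S_INR.
  assert (/ (12 * Rabs (y - 1/3)) * (12 * Rabs (y - 1/3)) = 1)
    by (field; lra).
  nra.
Qed.

(* (0,1] ⊆ Cl, using reflection for (1/2,1). *)
Lemma C_unit_interval : forall y, 0 < y <= 1 -> C y.
Proof.
  intros y Hy.
  destruct (Rlt_le_dec y (1/2)); [apply C_lower_half; lra|].
  destruct (Req_dec y (1/2)) as [-> | Hh]; [exact C_half|].
  destruct (Req_dec y 1) as [-> | H1]; [exact C_one|].
  replace y with (1 - (1 - y)) by ring.
  apply Cl_reflect; unfold Omega_pos; try lra. apply C_lower_half; lra.
Qed.

(* The functional equation propagates (0,1] to (0, n+1]. *)
Lemma C_bounded : forall n x, 0 < x <= INR n + 1 -> C x.
Proof.
  induction n as [|n IH]; intros x Hx.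
  - simpl in Hx. apply C_unit_interval; lra.
  - destruct (Rle_lt_dec x 1); [apply C_unit_interval; lra|].
    replace x with ((x - 1) + 1) by ring.
    apply Cl_shift; unfold Omega_pos; try lra.
    apply IH. rewrite S_INR in Hx. lra.
Qed.

Theorem mainTheorem5 : fundamental_set Omega_pos S5.
Proof.
  intros p. split.
  - apply Cl_sound. unfold S5, Omega_pos. intros x Hx. lra.
  - intros Hp. destruct (INR_unbounded p) as [n Hn].
    apply (C_bounded n). unfold Omega_pos in Hp. lra.
Qed.
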